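(* Let $C$ be a Reedy category and $\Gamma=\int N^{-,+}(C)$. Let $\Gamma_-$ be the wide subcategory consisting of the morphisms $(\sigma,\mathrm{id}_{X\circ\sigma})\colon([m],X\circ\sigma)\to([n],X)$ with $([n],X)\in\mathrm{Ob}\,\Gamma$ and $\sigma\colon[m]\to[n]$ surjective, and let $\Gamma_+$ be the wide subcategory of morphisms $(\delta,\theta)$ of $\Gamma$ with $\delta$ injective. Then $(\Gamma_-,\Gamma_+)$ is a Reedy structure on $\Gamma$.
   Context: $\Delta$: finite ordinals $[n]=\{0<\dots<n\}$, $n\ge0$, with order-preserving maps. A Reedy structure on a category $C$ is a pair $(C_-,C_+)$ of wide subcategories such that: every morphism factors uniquely as a morphism of $C_-$ followed by one of $C_+$; every morphism of $C_-$ and $C_+$ is decidably either an identity or not (equivalently each is obtained from a semicategory by freely adjoining identities); and the relation on objects ($x<'y$ iff there is a non-identity $x\to y$ in $C_+$ or a non-identity $y\to x$ in $C_-$) is well-founded. (The paper works constructively.) $\int N^{-,+}(C)$: objects $([n],X)$ with $X\colon[n]\to C$ a functor sending all morphisms into $C_-$; morphisms $([m],X)\to([n],Y)$ are pairs $(\alpha,\theta)$, $\alpha\colon[m]\to[n]$ in $\Delta$, $\theta\colon X\Rightarrow Y\circ\alpha$ a natural transformation with every component in $C_+$; composition $(\beta,\varphi)\circ(\alpha,\theta)=(\beta\alpha,(\varphi\alpha)\circ\theta)$. *)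

From Stdlib Require Import ProofIrrelevance FunctionalExtensionality.
From mathcomp Require Import all_boot.
Set Implicit Arguments. Unset Strict Implicit. Unset Printing Implicit Defensive.

Record Cat := MkCat {
  ob :> Type;
  hom : ob -> ob -> Type;
  idm : forall x, hom x x;
  comp : forall x y z, hom y z -> hom x y -> hom x z;
  comp_id_l : forall x y (f : hom x y), comp (idm y) f = f;
  comp_id_r : forall x y (f : hom x y), comp f (idm x) = f;
  comp_assoc : forall x y z w (f : hom x y) (g : hom y z) (h : hom z w),
      comp (comp h g) f = comp h (comp g f) }.
Arguments hom {c} x y.
Arguments idm {c} x.
Arguments comp {c x y z} _ _.

Definition is_id (C : Cat) (x y : C) (f : hom x y) : Prop :=
  exists e : x = y, eq_rect x (fun z => hom x z) (idm x) y e = f.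
Arguments is_id {C x y} f.

Definition morclass (C : Cat) := forall x y : C, hom x y -> Prop.

Definition is_wide (C : Cat) (P : morclass C) : Prop :=
  (forall x : C, P x x (idm x)) /\
  (forall (x y z : C) (f : hom x y) (g : hom y z),
      P y z g -> P x y f -> P x z (comp g f)).

Record WideSub (C : Cat) := MkWideSub {
  wmem :> morclass C;
  wmem_wide : is_wide wmem }.
Arguments wmem {C} w x y _.

Definition reedy_lt (C : Cat) (Pm Pp : morclass C) (x y : C) : Prop :=
  (exists f : hom x y, Pp x y f /\ ~ is_id f) \/
  (exists f : hom y x, Pm y x f /\ ~ is_id f).

(* A Reedy structure (C_-, C_+) on C. Decidability of being an identity
   is a genuine (Type-valued) decision procedure, as in constructive math. *)
Record Reedy (C : Cat) (Pm Pp : morclass C) : Type := MkReedy {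
  reedy_wide_m : is_wide Pm;
  reedy_wide_p : is_wide Pp;
  reedy_fact : forall (x y : C) (f : hom x y),
      exists (z : C) (g : hom x z) (h : hom z y),
        Pm x z g /\ Pp z y h /\ comp h g = f;
  reedy_fact_uniq : forall (x y : C) (f : hom x y)
      (z : C) (g : hom x z) (h : hom z y) (z' : C) (g' : hom x z') (h' : hom z' y),
      Pm x z g -> Pp z y h -> comp h g = f ->
      Pm x z' g' -> Pp z' y h' -> comp h' g' = f ->
      existT (fun w => (hom x w * hom w y)%type) z (g, h) =
      existT (fun w => (hom x w * hom w y)%type) z' (g', h');
  reedy_dec_m : forall (x y : C) (f : hom x y), Pm x y f -> {is_id f} + {~ is_id f};
  reedy_dec_p : forall (x y : C) (f : hom x y), Pp x y f -> {is_id f} + {~ is_id f};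
  reedy_wf : well_founded (reedy_lt Pm Pp) }.
Arguments Reedy : clear implicits.

(* [n] = {0 < ... < n} is 'I_n.+1; morphisms are order-preserving maps. *)
Record dmap (m n : nat) := DMap {
  dfun :> 'I_m.+1 -> 'I_n.+1;
  dmono : forall i j : 'I_m.+1, (i <= j)%N -> (dfun i <= dfun j)%N }.

Definition did (n : nat) : dmap n n := @DMap n n (fun i => i) (fun i j h => h).

Definition dcomp (l m n : nat) (b : dmap m n) (a : dmap l m) : dmap l n :=
  @DMap l n (fun i => b (a i)) (fun i j h => dmono b (dmono a h)).

Definition dsurj (m n : nat) (s : dmap m n) : Prop := forall y, exists x, s x = y.
Definition dinj (m n : nat) (s : dmap m n) : Prop := injective s.

Section Gamma.
Variables (C : Cat) (Cm Cp : WideSub C).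

Record chain (n : nat) := Chain {
  cobj :> 'I_n.+1 -> C;
  cmor : forall i j : 'I_n.+1, (i <= j)%N -> hom (cobj i) (cobj j);
  cmor_id : forall (i : 'I_n.+1) (h : (i <= i)%N), cmor h = idm (cobj i);
  cmor_comp : forall (i j k : 'I_n.+1) (hij : (i <= j)%N) (hjk : (j <= k)%N) (hik : (i <= k)%N),
      cmor hik = comp (cmor hjk) (cmor hij);
  cmor_minus : forall (i j : 'I_n.+1) (h : (i <= j)%N), wmem Cm _ _ (cmor h) }.
Arguments cmor {n} _ {i j} _.
Arguments cmor_id {n} _ i h.
Arguments cmor_comp {n} _ {i j k} hij hjk hik.
Arguments cmor_minus {n} _ {i j} h.

Record gob := GOb { gn : nat; gX : chain gn }.

Record ghom (a b : gob) := GHom {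
  galpha : dmap (gn a) (gn b);
  gtheta : forall i, hom (gX a i) (gX b (galpha i));
  gtheta_plus : forall i, wmem Cp _ _ (gtheta i);
  gnat : forall (i j : 'I_(gn a).+1) (h : (i <= j)%N) (h' : (galpha i <= galpha j)%N),
      comp (gtheta j) (cmor (gX a) h) = comp (cmor (gX b) h') (gtheta i) }.
Arguments galpha {a b} _.
Arguments gtheta {a b} _ i.
Arguments gtheta_plus {a b} _ i.
Arguments gnat {a b} _ {i j} h h'.

Lemma gid_nat (a : gob) (i j : 'I_(gn a).+1) (h : (i <= j)%N) (h' : (did (gn a) i <= did (gn a) j)%N) :
  comp (idm (gX a j)) (cmor (gX a) h) = comp (cmor (gX a) h') (idm (gX a i)).
Proof. by rewrite comp_id_l comp_id_r (eq_irrelevance h h'). Qed.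

Definition gid (a : gob) : ghom a a :=
  @GHom a a (did (gn a)) (fun i => idm (gX a i))
    (fun i => (proj1 (wmem_wide Cp)) _) (@gid_nat a).

Lemma gcomp_nat (a b c : gob) (g : ghom b c) (f : ghom a b) (i j : 'I_(gn a).+1) (h : (i <= j)%N)
  (h' : (dcomp (galpha g) (galpha f) i <= dcomp (galpha g) (galpha f) j)%N) :
  comp (comp (gtheta g (galpha f j)) (gtheta f j)) (cmor (gX a) h) =
  comp (cmor (gX c) h') (comp (gtheta g (galpha f i)) (gtheta f i)).
Proof.
rewrite comp_assoc (gnat f h (dmono (galpha f) h)) -comp_assoc.
by rewrite (gnat g (dmono (galpha f) h) h') comp_assoc.
Qed.

Definition gcomp (a b c : gob) (g : ghom b c) (f : ghom a b) : ghom a c :=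
  @GHom a c (dcomp (galpha g) (galpha f))
    (fun i => comp (gtheta g (galpha f i)) (gtheta f i))
    (fun i => (proj2 (wmem_wide Cp)) _ _ _ _ _ (gtheta_plus g _) (gtheta_plus f i))
    (@gcomp_nat a b c g f).

Lemma ghom_ext (a b : gob) (al : dmap (gn a) (gn b)) t1 t2 p1 p2 n1 n2 :
  t1 = t2 -> @GHom a b al t1 p1 n1 = @GHom a b al t2 p2 n2.
Proof.
move=> e; subst t2.
have -> : p1 = p2 by apply: proof_irrelevance.
by have -> : n1 = n2 by apply: proof_irrelevance.
Qed.

Lemma gid_l (a b : gob) (f : ghom a b) : gcomp (gid b) f = f.
Proof.
case: f => [[al mo] t p n].
rewrite /gcomp /gid /dcomp /=.
have e : (fun (i j : 'I_(gn a).+1) (h : (i <= j)%N) => mo i j h) = mo by [].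
move: (@gcomp_nat _ _ _ _ _) => /= nn.
move: nn; rewrite e => nn.
apply: ghom_ext; apply: functional_extensionality_dep => i.
by rewrite comp_id_l.
Qed.

Lemma gid_r (a b : gob) (f : ghom a b) : gcomp f (gid a) = f.
Proof.
case: f => [[al mo] t p n].
rewrite /gcomp /gid /dcomp /=.
move: (@gcomp_nat _ _ _ _ _) => /= nn.
apply: ghom_ext; apply: functional_extensionality_dep => i.
by rewrite comp_id_r.
Qed.

Lemma gassoc (a b c d : gob) (f : ghom a b) (g : ghom b c) (h : ghom c d) :
  gcomp (gcomp h g) f = gcomp h (gcomp g f).
Proof.
rewrite /gcomp /dcomp /=.
move: (@gcomp_nat _ _ _ _ _) (@gcomp_nat _ _ _ _ _) => /= n1 n2.
apply: ghom_ext; apply: functional_extensionality_dep => i.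
by rewrite comp_assoc.
Qed.

Definition Gamma : Cat :=
  @MkCat gob ghom gid gcomp gid_l gid_r gassoc.

Definition restrict (b : gob) (m : nat) (s : dmap m (gn b)) : gob :=
  @GOb m (@Chain m (fun i => gX b (s i))
     (fun i j h => cmor (gX b) (dmono s h))
     (fun i h => cmor_id (gX b) _ _)
     (fun i j k hij hjk hik => cmor_comp (gX b) _ (dmono s hjk) _)
     (fun i j h => cmor_minus (gX b) _)).

Lemma canon_nat (b : gob) (m : nat) (s : dmap m (gn b)) (i j : 'I_m.+1) (h : (i <= j)%N)
  (h' : (s i <= s j)%N) :
  comp (idm (gX b (s j))) (cmor (gX (restrict s)) h) =
  comp (cmor (gX b) h') (idm (gX b (s i))).
Proof. by rewrite comp_id_l comp_id_r /= (eq_irrelevance (dmono s h) h'). Qed.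

Definition canon (b : gob) (m : nat) (s : dmap m (gn b)) : ghom (restrict s) b :=
  @GHom (restrict s) b s (fun i => idm (gX b (s i)))
    (fun i => (proj1 (wmem_wide Cp)) _) (@canon_nat b m s).

Definition GammaMinus : morclass Gamma :=
  fun (a b : gob) (f : ghom a b) =>
    exists s : dmap (gn a) (gn b), dsurj s /\
      exists e : restrict s = a,
        f = eq_rect (restrict s) (fun a' => ghom a' b) (canon s) a e.

Definition GammaPlus : morclass Gamma :=
  fun (a b : gob) (f : ghom a b) => dinj (galpha f).

End Gamma.

Arguments Gamma {C} Cm Cp.
Arguments GammaMinus {C} Cm Cp : rename.
Arguments GammaPlus {C} Cm Cp : rename.

(* Factor the Delta-component of a morphism (alpha, theta) of Gamma as
   alpha = delta o sigma with sigma surjective and delta injective.  Naturality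
   of theta gives theta_j o X(i <= j) = theta_i for i <= j, a (C_-, C_+)-
   factorization of theta_i; when sigma i = sigma j, uniqueness of Reedy
   factorizations in C makes X(i <= j) an identity and theta_j = theta_i.  So X
   and theta are constant on the fibres of sigma and descend along sigma, which
   factors (alpha, theta) through Gamma_- followed by Gamma_+; uniqueness comes
   from that of the surjective-injective factorization in Delta.
   A non-identity of Gamma_- strictly shortens the chain, and a non-identity of
   Gamma_+ either lengthens it or, at equal length, is a family of C_+ maps
   X i -> Y i not all identities.  Hence <' on Gamma is well founded by
   induction on the length, then on the pointwise order induced by <' on C. *)

From Stdlib Require Import ProofIrrelevance FunctionalExtensionality.
From mathcomp Require Import all_boot zify.
Set Implicit Arguments. Unset Strict Implicit. Unset Printing Implicit Defensive.

Lemma dmap_ext m n (a b : dmap m n) : a =1 b -> a = b.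
Proof.
case: a b => [fa ma] [fb mb] /= /functional_extensionality Efab; subst fb.
by rewrite (proof_irrelevance _ ma mb).
Qed.

Section DeltaMaps.
Variables m n : nat.
Implicit Types (f d s : dmap m n) (i j : 'I_m.+1) (r : 'I_n.+1).

Lemma dinj_ltn f : dinj f -> forall i j, i < j -> f i < f j.
Proof.
move=> injf i j lt_ij; rewrite ltn_neqAle dmono ?(ltnW lt_ij) // andbT.
by apply: contraTneq lt_ij => /ord_inj/injf->; rewrite ltnn.
Qed.

Lemma dsurj_succ s : dsurj s -> forall i j, j = i.+1 :> nat -> s j <= (s i).+1.
Proof.
move=> surjs i j Ej; rewrite leqNgt; apply/negP=> lt_sj.
have lt_n : (s i).+1 < n.+1 by exact: ltn_trans lt_sj (ltn_ord (s j)).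
have [k Ek] := surjs (Ordinal lt_n).
case: (leqP k i) => [le_ki | lt_ik].
  by have := dmono s le_ki; rewrite Ek /= ltnn.
have le_jk : j <= k by rewrite Ej.
by have := dmono s le_jk; rewrite Ek /= leqNgt lt_sj.
Qed.

Lemma dinj_gap f : dinj f -> forall i j, i <= j -> f i + (j - i) <= f j.
Proof.
move=> injf i [j lt_jm]; elim: j lt_jm => [|j IHj] lt_jm;
  rewrite leq_eqVlt => /predU1P[Eij | //];
  try by have -> : i = Ordinal lt_jm := ord_inj Eij; rewrite subnn addn0.
rewrite ltnS => lt_ij; have lt_jm' : j < m.+1 by exact: ltnW.
have := IHj lt_jm' lt_ij; have := dinj_ltn injf (ltnSn j : Ordinal lt_jm' < Ordinal lt_jm).
rewrite /=; lia.
Qed.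

Lemma dsurj_gap s : dsurj s -> forall i j, i <= j -> s j <= s i + (j - i).
Proof.
move=> surjs i [j lt_jm]; elim: j lt_jm => [|j IHj] lt_jm;
  rewrite leq_eqVlt => /predU1P[Eij | //];
  try by have -> : i = Ordinal lt_jm := ord_inj Eij; rewrite subnn addn0.
rewrite ltnS => lt_ij; have lt_jm' : j < m.+1 by exact: ltnW.
have := IHj lt_jm' lt_ij.
have := dsurj_succ surjs (i := Ordinal lt_jm') (j := Ordinal lt_jm) erefl.
rewrite /=; lia.
Qed.

Lemma dinj_leq f : dinj f -> m <= n.
Proof.
move=> injf; have := dinj_gap injf (leq0n ord_max : @ord0 m <= ord_max).
by have := ltn_ord (f ord_max); rewrite /=; lia.
Qed.

Lemma dsurj0 s : dsurj s -> s ord0 = 0 :> nat.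
Proof.
move=> surjs; have [k Ek] := surjs ord0; apply/eqP; rewrite -leqn0.
by have := dmono s (leq0n k : @ord0 m <= k); rewrite Ek.
Qed.

Lemma dsurj_max s : dsurj s -> s ord_max = n :> nat.
Proof.
move=> surjs; have [k Ek] := surjs ord_max; apply/eqP; rewrite eqn_leq -ltnS ltn_ord /=.
by have := dmono s (leq_ord k : k <= @ord_max m); rewrite Ek.
Qed.

Lemma dsurj_geq s : dsurj s -> n <= m.
Proof.
move=> surjs; have := dsurj_gap surjs (leq0n ord_max : @ord0 m <= ord_max).
by rewrite dsurj0 // dsurj_max //= subn0.
Qed.

Lemma dinj_idE f : dinj f -> m = n -> forall i, f i = i :> nat.
Proof.
move=> injf Emn i; have := dinj_gap injf (leq0n i : ord0 <= i).
have := dinj_gap injf (leq_ord i : i <= ord_max).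
by have := ltn_ord (f ord_max); have := ltn_ord i; rewrite /=; lia.
Qed.

Lemma dsurj_idE s : dsurj s -> m = n -> forall i, s i = i :> nat.
Proof.
move=> surjs Emn i; have := dsurj_gap surjs (leq0n i : ord0 <= i).
have := dsurj_gap surjs (leq_ord i : i <= ord_max).
by rewrite dsurj0 // dsurj_max //=; have := ltn_ord i; lia.
Qed.

Definition dsec s r : 'I_m.+1 := odflt ord0 [pick i | s i == r].

Lemma dsecK s : dsurj s -> forall r, s (dsec s r) = r.
Proof.
move=> surjs r; rewrite /dsec; case: pickP => [i /eqP // | none].
by have [i Ei] := surjs r; have := none i; rewrite Ei eqxx.
Qed.

Lemma dsec_mono s : dsurj s -> forall r r', r <= r' -> dsec s r <= dsec s r'.
Proof.
move=> surjs r r' le_rr'; rewrite leqNgt; apply/negP=> lt_sec.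
have := dmono s (ltnW lt_sec); rewrite !dsecK // => le_r'r.
have Er : r = r' by apply: ord_inj; apply/eqP; rewrite eqn_leq le_rr'.
by move: lt_sec; rewrite Er ltnn.
Qed.

End DeltaMaps.

Lemma dsurj_step m k n (s : dmap m k) (d : dmap k n) : dsurj s -> dinj d ->
  forall i j : 'I_m.+1, j = i.+1 :> nat -> s j = s i + (d (s i) != d (s j)) :> nat.
Proof.
move=> surjs injd i j Ej; have le_ij : i <= j by rewrite Ej.
have := dmono s le_ij; have := dsurj_succ surjs Ej.
case: eqP => [/injd-> | ne_d]; first by rewrite addn0.
have ne_s : s i <> s j :> nat by move=> /ord_inj E; apply: ne_d; rewrite E.
lia.
Qed.

Lemma dmap_epi_mono m n (a : dmap m n) :
  exists k (s : dmap m k) (d : dmap k n), [/\ dsurj s, dinj d & forall i, d (s i) = a i].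
Proof.
pose S := [seq v <- iota 0 n.+1 | v \in [seq a i : nat | i <- enum 'I_m.+1]].
have sortS : sorted ltn S := sorted_filter ltn_trans _ (iota_ltn_sorted 0 n.+1).
have uniqS : uniq S := sorted_uniq ltn_trans ltnn sortS.
have aS i : (a i : nat) \in S.
  by rewrite mem_filter mem_iota add0n ltn_ord andbT andbT; apply: map_f; rewrite mem_enum.
pose k := (size S).-1.
have sizeS : size S = k.+1.
  by rewrite prednK //; move: (aS ord0); rewrite -index_mem; apply: leq_ltn_trans.
have nthS (r : 'I_k.+1) : nth 0 S r \in S by rewrite mem_nth // sizeS.
pose s i : 'I_k.+1 := inord (index (a i : nat) S).
have sE i : s i = index (a i : nat) S :> nat by rewrite inordK // -sizeS index_mem.
pose d (r : 'I_k.+1) : 'I_n.+1 := inord (nth 0 S r).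
have dE r : d r = nth 0 S r :> nat.
  by rewrite inordK //; move: (nthS r); rewrite mem_filter mem_iota => /and3P[].
have s_mono (i j : 'I_m.+1) : i <= j -> s i <= s j.
  move=> le_ij; rewrite !sE leqNgt; apply/negP.
  by move=> /(sorted_ltn_index ltn_trans sortS _ _ (aS j) (aS i)); rewrite ltnNge dmono.
have d_mono (r r' : 'I_k.+1) : r <= r' -> d r <= d r'.
  rewrite !dE leq_eqVlt => /predU1P[/ord_inj-> // | lt_rr'].
  by apply/ltnW/(sorted_ltn_nth ltn_trans 0 sortS); rewrite ?inE ?sizeS.
exists k, (DMap s_mono), (DMap d_mono); split => /=.
- move=> r; have /mapP[i _ Ei] : nth 0 S r \in [seq a i : nat | i <- enum 'I_m.+1].
    by have := nthS r; rewrite mem_filter => /andP[].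
  by exists i; apply: ord_inj; rewrite sE -Ei index_uniq // sizeS.
- move=> r r' /(congr1 val); rewrite /= !dE => /eqP.
  by rewrite nth_uniq ?sizeS // => /eqP/ord_inj.
- by move=> i; apply: ord_inj; rewrite dE sE nth_index.
Qed.

Lemma dmap_epi_mono_uniq m k k' n (s : dmap m k) (d : dmap k n) (s' : dmap m k') (d' : dmap k' n) :
  dsurj s -> dinj d -> dsurj s' -> dinj d' -> (forall i, d (s i) = d' (s' i)) ->
  k = k' /\ forall i, s i = s' i :> nat.
Proof.
move=> surjs injd surjs' injd' Eds.
have Es i : s i = s' i :> nat.
  case: i => i lt_im; elim: i lt_im => [|i IHi] lt_im.
    by rewrite (_ : Ordinal lt_im = ord0) ?dsurj0 //; apply: ord_inj.
  have lt_im' : i < m.+1 := ltnW lt_im.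
  rewrite (dsurj_step surjs injd (i := Ordinal lt_im') (j := Ordinal lt_im) erefl).
  by rewrite (dsurj_step surjs' injd' (i := Ordinal lt_im') (j := Ordinal lt_im) erefl) !Eds IHi.
by split=> //; rewrite -(dsurj_max surjs) -(dsurj_max surjs') Es.
Qed.

(* Morphisms with their endpoints packed in, so that morphisms between
   propositionally equal objects can be compared with Leibniz equality. *)
Definition arrow (C : Cat) := {x : C & {y : C & hom x y}}.
Definition arr (C : Cat) (x y : C) (f : hom x y) : arrow C := existT _ x (existT _ y f).

Section Arrows.
Variable C : Cat.
Implicit Types x y z w : C.

Lemma arr_inj x y (f g : hom x y) : arr f = arr g -> f = g.
Proof. by move=> /(inj_pair2 _ _ _ _ _)/(inj_pair2 _ _ _ _ _). Qed.

Lemma arr_src x y x' y' (f : hom x y) (g : hom x' y') : arr f = arr g -> x = x'.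
Proof. by move/(congr1 (@projT1 _ _)). Qed.

Lemma arr_tgt x y x' y' (f : hom x y) (g : hom x' y') : arr f = arr g -> y = y'.
Proof. by move/(congr1 (fun a : arrow C => projT1 (projT2 a))). Qed.

Lemma arr_comp x y z x' y' z' (f : hom x y) (g : hom y z) (f' : hom x' y') (g' : hom y' z') :
  arr f = arr f' -> arr g = arr g' -> arr (comp g f) = arr (comp g' f').
Proof.
move=> Ef Eg; have Ex := arr_src Ef; have Ey := arr_tgt Ef; have Ez := arr_tgt Eg.
by subst x' y' z'; rewrite (arr_inj Ef) (arr_inj Eg).
Qed.

Lemma arr_comp_idr x y z w (f : hom x y) (g : hom y z) :
  arr f = arr (idm w) -> arr (comp g f) = arr g.
Proof.
move=> Ef; have Ex := arr_src Ef; have Ey := arr_tgt Ef; subst w y.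
by rewrite (arr_inj Ef) comp_id_r.
Qed.

Lemma arr_comp_idl x y z w (f : hom x y) (g : hom y z) :
  arr g = arr (idm w) -> arr (comp g f) = arr f.
Proof.
move=> Eg; have Ey := arr_src Eg; have Ez := arr_tgt Eg; subst w z.
by rewrite (arr_inj Eg) comp_id_l.
Qed.

Lemma is_idE x y (f : hom x y) : is_id f <-> arr f = arr (idm x).
Proof.
split=> [[e <-] | Ef]; first by case: y / e f.
by have Ey := arr_tgt Ef; subst y; exists erefl; rewrite (arr_inj Ef).
Qed.

Lemma arr_cast_tgt (I : Type) (Y : I -> C) x (u v : I) (e : u = v) (t : hom x (Y u)) :
  arr (eq_rect u (fun i => hom x (Y i)) t v e) = arr t.
Proof. by case: v / e. Qed.

Lemma morclass_cast_tgt (P : morclass C) (I : Type) (Y : I -> C) x (u v : I) (e : u = v)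
  (t : hom x (Y u)) : P _ _ t -> P _ _ (eq_rect u (fun i => hom x (Y i)) t v e).
Proof. by case: v / e. Qed.

End Arrows.

Lemma reedy_plus_factor_trivial (C : Cat) (Pm Pp : morclass C) (R : Reedy C Pm Pp)
    (x x' y y' : C) (t : hom x y) (t' : hom x' y') (u : hom x x') :
  Pm _ _ u -> Pp _ _ t -> Pp _ _ t' -> arr (comp t' u) = arr t ->
  arr u = arr (idm x) /\ arr t' = arr t.
Proof.
move=> Pu Pt Pt' Et; have Ey := arr_tgt Et; subst y'.
have := reedy_fact_uniq R Pu Pt' (arr_inj Et) (proj1 (reedy_wide_m R) x) Pt (comp_id_r t).
move=> E; split.
- by have := congr1 (fun p : {w : C & (hom x w * hom w y)%type} => arr (projT2 p).1) E.
- by have := congr1 (fun p : {w : C & (hom x w * hom w y)%type} => arr (projT2 p).2) E.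
Qed.

Section GammaBasics.
Variables (C : Cat) (Cm Cp : WideSub C).
Local Notation G := (Gamma Cm Cp).
Local Notation garr f := (@arr G _ _ f).

Lemma cmor_arr_eq n (X : chain Cm n) (i j i' j' : 'I_n.+1) (h : i <= j) (h' : i' <= j') :
  i = i' -> j = j' -> arr (cmor X h) = arr (cmor X h').
Proof. by move=> Ei Ej; subst i' j'; rewrite (eq_irrelevance h h'). Qed.

Lemma cmor_arr_id n (X : chain Cm n) (i j : 'I_n.+1) (h : i <= j) :
  i = j -> arr (cmor X h) = arr (idm (X i)).
Proof. by move=> Eij; subst j; rewrite cmor_id. Qed.

Lemma gob_eq (a b : gob Cm) : gn a = gn b ->
  (forall (i j : 'I_(gn a).+1) (i' j' : 'I_(gn b).+1) (h : i <= j) (h' : i' <= j'),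
     i = i' :> nat -> j = j' :> nat -> arr (cmor (gX a) h) = arr (cmor (gX b) h')) ->
  a = b.
Proof.
case: a b => n [X mX mX_id mX_comp mX_minus] [n' [Y mY mY_id mY_comp mY_minus]] /= En.
subst n' => Emor.
have EXY : X = Y.
  by apply: functional_extensionality => i; exact: arr_src (Emor i i i i (leqnn _) (leqnn _) _ _).
subst Y; have EmXY : mX = mY.
  do 3 apply: functional_extensionality_dep => ?; exact/arr_inj/Emor.
subst mY; rewrite (proof_irrelevance _ mX_id mY_id) (proof_irrelevance _ mX_comp mY_comp).
by rewrite (proof_irrelevance _ mX_minus mY_minus).
Qed.

Lemma gob_obj (a b : gob Cm) : a = b ->
  forall (i : 'I_(gn a).+1) (i' : 'I_(gn b).+1), i = i' :> nat -> gX a i = gX b i'.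
Proof. by move=> <- i i' /ord_inj->. Qed.

Lemma gob_cmor (a b : gob Cm) : a = b ->
  forall (i j : 'I_(gn a).+1) (i' j' : 'I_(gn b).+1) (h : i <= j) (h' : i' <= j'),
    i = i' :> nat -> j = j' :> nat -> arr (cmor (gX a) h) = arr (cmor (gX b) h').
Proof. by move=> <- i j i' j' h h' /ord_inj Ei /ord_inj Ej; apply: cmor_arr_eq. Qed.

Lemma ghom_eq (a b : gob Cm) (f g : ghom Cp a b) :
  galpha f =1 galpha g -> (forall i, arr (gtheta f i) = arr (gtheta g i)) -> f = g.
Proof.
case: f g => al t t_plus t_nat [al' t' t'_plus t'_nat] /= /dmap_ext Eal; subst al' => Et.
have Ett' : t = t' by apply: functional_extensionality_dep => i; exact/arr_inj/Et.
by subst t'; congr GHom; apply: proof_irrelevance.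
Qed.

Lemma garr_eq (a b a' b' : gob Cm) (f : ghom Cp a b) (f' : ghom Cp a' b') :
  a = a' -> b = b' ->
  (forall (i : 'I_(gn a).+1) (i' : 'I_(gn a').+1),
     i = i' :> nat -> galpha f i = galpha f' i' :> nat) ->
  (forall (i : 'I_(gn a).+1) (i' : 'I_(gn a').+1),
     i = i' :> nat -> arr (gtheta f i) = arr (gtheta f' i')) ->
  garr f = garr f'.
Proof.
move=> Ea Eb; subst a' b' => Eal Eth.
by rewrite (@ghom_eq _ _ f f') // => i; [apply: ord_inj; exact: Eal | exact: Eth].
Qed.

Lemma garr_inv (a b a' b' : gob Cm) (f : ghom Cp a b) (f' : ghom Cp a' b') :
  garr f = garr f' ->
  [/\ a = a', b = b',
      forall (i : 'I_(gn a).+1) (i' : 'I_(gn a').+1),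
        i = i' :> nat -> galpha f i = galpha f' i' :> nat &
      forall (i : 'I_(gn a).+1) (i' : 'I_(gn a').+1),
        i = i' :> nat -> arr (gtheta f i) = arr (gtheta f' i')].
Proof.
move=> Ef; have Ea := arr_src Ef; have Eb := arr_tgt Ef; subst a' b'.
by have Eff' := arr_inj Ef; subst f'; split=> // i i' /ord_inj->.
Qed.

Lemma garr_cast_src (P a b : gob Cm) (f : ghom Cp P b) (e : P = a) :
  garr (eq_rect P (fun a' => ghom Cp a' b) f a e) = garr f.
Proof. by case: a / e. Qed.

Lemma cast_src_of_garr (P a b : gob Cm) (f : ghom Cp P b) (e : P = a) (g : ghom Cp a b) :
  garr f = garr g -> eq_rect P (fun a' => ghom Cp a' b) f a e = g.
Proof. by move=> Efg; apply: (@arr_inj G); rewrite garr_cast_src. Qed.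

Lemma gamma_minus_inv (a b : gob Cm) (f : ghom Cp a b) : GammaMinus Cm Cp a b f ->
  exists s : dmap (gn a) (gn b), [/\ dsurj s, restrict s = a,
    galpha f =1 s & forall i, arr (gtheta f i) = arr (idm (gX b (s i)))].
Proof.
case=> s [surjs [e ->]]; exists s.
have [_ _ Eal Eth] := garr_inv (garr_cast_src (canon Cp s) e).
by split=> // i; [apply: ord_inj; exact: Eal | exact: Eth].
Qed.

Lemma restrict_surj_inj m (z z' : gob Cm) (s : dmap m (gn z)) (s' : dmap m (gn z')) :
  dsurj s -> restrict s = restrict s' -> gn z = gn z' -> (forall i, s i = s' i :> nat) ->
  z = z'.
Proof.
move=> surjs Ess' En Es; apply: gob_eq => // r r' r0 r0' hr hr0 Er Er'.
have hsec := dsec_mono surjs hr.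
rewrite -(cmor_arr_eq (gX z) (dmono s hsec) hr (dsecK surjs r) (dsecK surjs r')).
rewrite (gob_cmor Ess' hsec hsec erefl erefl) /=.
by apply: cmor_arr_eq; apply: ord_inj; rewrite -Es dsecK.
Qed.

Lemma gamma_minus_wide : is_wide (GammaMinus Cm Cp).
Proof.
split=> [x | x y z f g Mg Mf].
  exists (did (gn x)); split=> [i | ]; first by exists i.
  have e : restrict (did (gn x)) = x.
    by apply: gob_eq => // i j i' j' h h' /ord_inj Ei /ord_inj Ej; apply: cmor_arr_eq.
  exists e; symmetry; apply: cast_src_of_garr; apply: garr_eq => //.
  by move=> i i' /ord_inj->.
have [s [surjs ex Eal Eth]] := gamma_minus_inv Mf.
have [s' [surjs' ey Eal' Eth']] := gamma_minus_inv Mg.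
exists (dcomp s' s); split.
  by move=> r; have [j <-] := surjs' r; have [i <-] := surjs j; exists i.
have e : restrict (dcomp s' s) = x.
  apply: gob_eq => // i j i' j' h h' Ei Ej.
  rewrite -(gob_cmor ex h' h' erefl erefl) /= -(gob_cmor ey (dmono s h') (dmono s h') erefl erefl).
  by apply: cmor_arr_eq; congr (s' (s _)); exact: ord_inj.
exists e; symmetry; apply: cast_src_of_garr; apply: garr_eq => // i i' /ord_inj Ei; subst i'.
  by rewrite /= Eal Eal'.
by rewrite /= (arr_comp_idr _ (Eth i)) Eth' Eal.
Qed.

Lemma gamma_plus_wide : is_wide (GammaPlus Cm Cp).
Proof. by split=> [x i j // | x y z f g injg injf i j /injg/injf]. Qed.

Lemma gamma_minus_idE (a b : gob Cm) (f : ghom Cp a b) :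
  GammaMinus Cm Cp a b f -> gn a = gn b -> garr f = garr (gid Cp a).
Proof.
move=> Mf En; have [s [surjs ea Eal Eth]] := gamma_minus_inv Mf.
have sE := dsurj_idE surjs En.
have eb : b = a.
  apply: (gob_eq (esym En)) => i j i' j' h h' Ei Ej.
  rewrite -(gob_cmor ea h' h' erefl erefl).
  by apply: cmor_arr_eq; apply: ord_inj; rewrite ?sE.
apply: garr_eq => // [i i' /= <- | i i' /ord_inj <- /=]; first by rewrite Eal sE.
by rewrite Eth (gob_obj eb (i := s i) (i' := i)) ?sE.
Qed.

Lemma gamma_plus_idE (a b : gob Cm) (f : ghom Cp a b) :
  GammaPlus Cm Cp a b f -> gn a = gn b ->
  (forall i, arr (gtheta f i) = arr (idm (gX a i))) -> garr f = garr (gid Cp a).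
Proof.
move=> injf En Eth; have alE := dinj_idE injf En.
have eb : b = a.
  apply: (gob_eq (esym En)) => i j i' j' h h' Ei Ej.
  have /(congr1 (@arr C _ _)) := gnat (g := f) h' (dmono (galpha f) h').
  rewrite (arr_comp_idl _ (Eth j')) (arr_comp_idr _ (Eth i')) => ->.
  by apply: cmor_arr_eq; apply: ord_inj; rewrite alE.
by apply: garr_eq => // [i i' /= <- | i i' /ord_inj <- /=]; rewrite ?alE ?Eth.
Qed.

End GammaBasics.

Section Factorization.
Variables (C : Cat) (Cm Cp : WideSub C) (R : Reedy C (wmem Cm) (wmem Cp)).
Variables (x y : gob Cm) (f : ghom Cp x y).
Local Notation X := (gX x).
Local Notation Y := (gX y).

Lemma ghom_fiber_trivial (i j : 'I_(gn x).+1) (h : i <= j) : galpha f i = galpha f j ->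
  arr (cmor X h) = arr (idm (X i)) /\ arr (gtheta f j) = arr (gtheta f i).
Proof.
move=> Eal; apply: (reedy_plus_factor_trivial R (cmor_minus X h) (gtheta_plus f i)).
  exact: gtheta_plus.
rewrite (gnat (g := f) h (dmono (galpha f) h)).
by apply: arr_comp_idl; apply: cmor_arr_id.
Qed.

Lemma gtheta_fiber (i j : 'I_(gn x).+1) : galpha f i = galpha f j ->
  arr (gtheta f i) = arr (gtheta f j).
Proof.
case: (leqP i j) => [le_ij | /ltnW le_ji] Eal.
  by rewrite (proj2 (ghom_fiber_trivial le_ij Eal)).
by rewrite (proj2 (ghom_fiber_trivial le_ji (esym Eal))).
Qed.

Section Descent.
Variables (k : nat) (s : dmap (gn x) k) (d : dmap k (gn y)).
Hypotheses (surjs : dsurj s) (Eds : forall i, d (s i) = galpha f i).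
Implicit Types (p q : 'I_(gn x).+1) (r : 'I_k.+1).

Lemma cmor_fiber (i j i' j' : 'I_(gn x).+1) (h : i <= j) (h' : i' <= j') :
  s i = s i' -> s j = s j' -> arr (cmor X h) = arr (cmor X h').
Proof.
have alE p q : s p = s q -> galpha f p = galpha f q by rewrite -!Eds => ->.
have widen (p u v q : 'I_(gn x).+1) (hp : p <= u) (huv : u <= v) (hq : v <= q)
    (hpq : p <= q) : s p = s u -> s v = s q -> arr (cmor X huv) = arr (cmor X hpq).
  move=> Epu Evq; have hpv := leq_trans hp huv.
  rewrite (cmor_comp X hpv hq hpq) (cmor_comp X hp huv hpv).
  rewrite (arr_comp_idl _ (proj1 (ghom_fiber_trivial hq (alE _ _ Evq)))).
  by rewrite (arr_comp_idr _ (proj1 (ghom_fiber_trivial hp (alE _ _ Epu)))).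
move=> Ei Ej.
have [p [hp hp' Epi Epi']] : exists p, [/\ p <= i, p <= i', s p = s i & s p = s i'].
  by case: (leqP i i') => lt; [exists i | exists i']; rewrite ?Ei; split=> //; exact: ltnW.
have [q [hq hq' Ejq Ej'q]] : exists q, [/\ j <= q, j' <= q, s j = s q & s j' = s q].
  by case: (leqP j j') => lt; [exists j' | exists j]; rewrite ?Ej; split=> //; exact: ltnW.
have hpq : p <= q := leq_trans hp (leq_trans h hq).
by rewrite (widen _ _ _ _ hp h hq hpq) // (widen _ _ _ _ hp' h' hq' hpq).
Qed.

Definition descent_chain : chain Cm k :=
  @Chain _ Cm k (fun r => X (dsec s r)) (fun r r' h => cmor X (dsec_mono surjs h))
    (fun r h => cmor_id X _) (fun r r' r'' h1 h2 h3 => cmor_comp X _ _ _)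
    (fun r r' h => cmor_minus X _).

Definition descent_ob : gob Cm := GOb descent_chain.

Lemma restrict_descent : restrict (b := descent_ob) s = x.
Proof.
apply: gob_eq => // i j i' j' h h' /ord_inj Ei /ord_inj Ej; subst i' j'.
by apply: cmor_fiber; rewrite dsecK.
Qed.

Definition descent_minus : ghom Cp x descent_ob :=
  eq_rect _ (fun a => ghom Cp a descent_ob) (canon Cp (b := descent_ob) s) x restrict_descent.

Lemma galpha_dsec r : galpha f (dsec s r) = d r.
Proof. by rewrite -Eds dsecK. Qed.

Definition descent_theta r : hom (X (dsec s r)) (Y (d r)) :=
  eq_rect _ (fun v => hom (X (dsec s r)) (Y v)) (gtheta f (dsec s r)) _ (galpha_dsec r).

Lemma descent_theta_plus r : wmem Cp _ _ (descent_theta r).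
Proof. by apply: (@morclass_cast_tgt C (wmem Cp)); apply: gtheta_plus. Qed.

Lemma descent_theta_nat (r r' : 'I_k.+1) (h : r <= r') (h' : d r <= d r') :
  comp (descent_theta r') (cmor descent_chain h) = comp (cmor Y h') (descent_theta r).
Proof.
apply: arr_inj.
rewrite (@arr_comp _ _ _ _ _ _ _ _ _ (cmor X (dsec_mono surjs h)) (gtheta f (dsec s r'))) //;
  last by rewrite arr_cast_tgt.
rewrite (gnat (g := f) _ (dmono (galpha f) (dsec_mono surjs h))).
apply: arr_comp; first by rewrite arr_cast_tgt.
by apply: cmor_arr_eq; apply: galpha_dsec.
Qed.

Definition descent_plus : ghom Cp descent_ob y :=
  @GHom _ _ Cp descent_ob y d descent_theta descent_theta_plus descent_theta_nat.

Lemma descent_factorization : gcomp descent_plus descent_minus = f.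
Proof.
have [_ _ Eal Eth] := garr_inv (garr_cast_src (canon Cp (b := descent_ob) s) restrict_descent).
have alE i : galpha descent_minus i = s i by apply: ord_inj; exact: Eal.
apply: (@arr_inj (Gamma Cm Cp)); apply: garr_eq => // i i' /ord_inj <- /=.
  by rewrite alE Eds.
rewrite (arr_comp_idr _ (Eth i i erefl)) arr_cast_tgt alE.
by apply: gtheta_fiber; rewrite galpha_dsec Eds.
Qed.

End Descent.

Lemma gamma_factorization : exists z (g : ghom Cp x z) (h : ghom Cp z y),
  GammaMinus Cm Cp x z g /\ GammaPlus Cm Cp z y h /\ gcomp h g = f.
Proof.
have [k [s [d [surjs injd Eds]]]] := dmap_epi_mono (galpha f).
exists (descent_ob surjs), (descent_minus surjs Eds), (descent_plus surjs Eds).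
split; first by exists s; split=> //; exists (restrict_descent surjs Eds).
by split; [exact: injd | exact: descent_factorization].
Qed.

End Factorization.

Lemma gamma_factorization_uniq (C : Cat) (Cm Cp : WideSub C) (x y : gob Cm) (f : ghom Cp x y)
    z (g : ghom Cp x z) (h : ghom Cp z y) z' (g' : ghom Cp x z') (h' : ghom Cp z' y) :
  GammaMinus Cm Cp x z g -> GammaPlus Cm Cp z y h -> gcomp h g = f ->
  GammaMinus Cm Cp x z' g' -> GammaPlus Cm Cp z' y h' -> gcomp h' g' = f ->
  existT (fun w => (ghom Cp x w * ghom Cp w y)%type) z (g, h) =
  existT (fun w => (ghom Cp x w * ghom Cp w y)%type) z' (g', h').
Proof.
move=> Mg Ph <- Mg' Ph' Ef.
have [s [surjs ez Eal Eth]] := gamma_minus_inv Mg.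
have [s' [surjs' ez' Eal' Eth']] := gamma_minus_inv Mg'.
have Eds i : galpha h' (s' i) = galpha h (s i).
  by have := congr1 (fun F => galpha F i) Ef; rewrite /= Eal Eal'.
have [Ek Es] := dmap_epi_mono_uniq surjs' Ph' surjs Ph Eds.
have Ez : z' = z := restrict_surj_inj surjs' (etrans ez' (esym ez)) Ek Es.
subst z'; have {}Es : s' =1 s := fun i => ord_inj (Es i).
have Egg' : g' = g by apply: ghom_eq => i; rewrite ?Eal ?Eal' ?Eth ?Eth' Es.
subst g'; suff -> : h' = h by [].
apply: ghom_eq => r; have [i <-] := surjs r.
  by apply: ord_inj; rewrite -Eds Es.
have := congr1 (fun F : ghom Cp x y => arr (gtheta F i)) Ef.
by rewrite /= !(arr_comp_idr _ (Eth i)) Eal.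
Qed.

Section Decidability.
Variables (C : Cat) (Cm Cp : WideSub C) (R : Reedy C (wmem Cm) (wmem Cp)).
Local Notation G := (Gamma Cm Cp).

Lemma gamma_dec_minus (x y : G) (f : hom x y) :
  GammaMinus Cm Cp x y f -> {is_id f} + {~ is_id f}.
Proof.
move=> Mf; case: (eqVneq (gn x) (gn y)) => [En | ne].
  by left; apply/is_idE; exact: gamma_minus_idE Mf En.
by right=> /is_idE/arr_tgt Exy; rewrite Exy eqxx in ne.
Qed.

Definition gtheta_idb (x y : gob Cm) (f : ghom Cp x y) i : bool :=
  if reedy_dec_p R (gtheta_plus f i) then true else false.

Lemma gtheta_idP (x y : gob Cm) (f : ghom Cp x y) i :
  reflect (is_id (gtheta f i)) (gtheta_idb f i).
Proof. by rewrite /gtheta_idb; case: reedy_dec_p => ?; constructor. Qed.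

Lemma gamma_plus_is_idE (x y : gob Cm) (f : ghom Cp x y) : GammaPlus Cm Cp x y f ->
  is_id (f : hom (c := G) x y) <-> gn x = gn y /\ forall i, is_id (gtheta f i).
Proof.
move=> Pf; split=> [/is_idE Ef | [En Eth]].
  have [_ Eyx _ Eth] := garr_inv Ef.
  by split=> [|i]; [rewrite Eyx | apply/is_idE; exact: Eth].
by apply/is_idE; apply: gamma_plus_idE => // i; apply/is_idE.
Qed.

Lemma gamma_plus_nonid (x y : gob Cm) (f : ghom Cp x y) : GammaPlus Cm Cp x y f ->
  gn x = gn y -> ~ is_id (f : hom (c := G) x y) -> exists i, ~ is_id (gtheta f i).
Proof.
move=> Pf En nid; case: (boolP [forall i, gtheta_idb f i]) => [/forallP all_id | ].
  by case: nid; apply/(gamma_plus_is_idE Pf); split=> // i; apply/gtheta_idP.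
by case/forallPn=> i /gtheta_idP; exists i.
Qed.

Lemma gamma_dec_plus (x y : G) (f : hom x y) :
  GammaPlus Cm Cp x y f -> {is_id f} + {~ is_id f}.
Proof.
move=> Pf; have idE := gamma_plus_is_idE Pf.
case: (eqVneq (gn x) (gn y)) => [En | ne]; last first.
  by right=> /idE[En _]; rewrite En eqxx in ne.
case: (boolP [forall i, gtheta_idb f i]) => [/forallP all_id | not_all].
  by left; apply/idE; split=> // i; apply/gtheta_idP.
by right=> /idE[_ all_id]; move/negP: not_all; apply; apply/forallP => i; apply/gtheta_idP.
Qed.

End Decidability.

Section PointwiseLt.
Variables (T : Type) (lt : T -> T -> Prop).
Hypothesis wf_lt : well_founded lt.

Definition pointwise_lt (k : nat) (F H : nat -> T) : Prop :=
  (forall i, i < k -> F i = H i \/ lt (F i) (H i)) /\ exists2 i, i < k & lt (F i) (H i).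

Lemma wf_pointwise_lt k : well_founded (pointwise_lt k).
Proof.
elim: k => [|k IHk] H; first by constructor=> F [_ [i]]; rewrite ltn0.
have [a Ea] : exists a, H k = a by exists (H k).
elim: (wf_lt a) H Ea => {}a _ IHa H Ea.
elim: (IHk H) Ea => {}H _ IHH Ea.
constructor=> F [F_le [i lt_ik lt_Fi]].
have last_lt : lt (F k) (H k) -> Acc (pointwise_lt k.+1) F.
  by move=> lt_Fk; apply: (IHa (F k) _ F erefl); rewrite -Ea.
have [Eik | ne_ik] := eqVneq i k; first by apply: last_lt; rewrite -Eik.
case: (F_le k (ltnSn k)) => [EFk | /last_lt //].
apply: IHH; last by rewrite EFk.
split=> [j lt_jk | ]; first exact/F_le/ltnW.
by exists i => //; rewrite ltn_neqAle ne_ik -ltnS.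
Qed.

End PointwiseLt.

Section WellFounded.
Variables (C : Cat) (Cm Cp : WideSub C) (R : Reedy C (wmem Cm) (wmem Cp)).
Local Notation ltC := (reedy_lt (wmem Cm) (wmem Cp)).
Local Notation ltG := (reedy_lt (GammaMinus Cm Cp) (GammaPlus Cm Cp)).

(* Only the indices i <= gn x are meaningful; [inord] makes the map total. *)
Definition gob_seq (x : gob Cm) (i : nat) : C := gX x (inord i).

Lemma gamma_lt_lex (x y : gob Cm) : ltG x y ->
  gn x < gn y \/ gn x = gn y /\ pointwise_lt ltC (gn x).+1 (gob_seq x) (gob_seq y).
Proof.
case=> [[f [Pf nid]] | [f [Mf nid]]]; last first.
  left; have [s [surjs _ _ _]] := gamma_minus_inv Mf.
  rewrite ltn_neqAle (dsurj_geq surjs) andbT; apply/eqP => En.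
  by apply: nid; apply/is_idE; exact: gamma_minus_idE Mf (esym En).
have := dinj_leq Pf; rewrite leq_eqVlt => /predU1P[En | ]; last by left.
right; split=> //; have alE := dinj_idE Pf En.
have seqE (i : 'I_(gn x).+1) : gob_seq x i = gX x i /\ gob_seq y i = gX y (galpha f i).
  rewrite /gob_seq inord_val; split=> //; congr (gX _ _).
  by apply: ord_inj; rewrite alE inordK // -En.
have plus_lt i : ~ is_id (gtheta f i) -> ltC (gX x i) (gX y (galpha f i)).
  by move=> nid_i; left; exists (gtheta f i); split=> //; exact: gtheta_plus.
split=> [i lt_i | ].
  have [-> ->] := seqE (Ordinal lt_i).
  case: (reedy_dec_p R (gtheta_plus f (Ordinal lt_i))) => [/is_idE/arr_tgt <- | /plus_lt];
    by [left | right].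
have [i nid_i] := gamma_plus_nonid R Pf En nid.
by exists i => //; have [-> ->] := seqE i; exact: plus_lt.
Qed.

Lemma gamma_wf : well_founded ltG.
Proof.
move=> y; have [n En] : exists n, gn y = n by exists (gn y).
elim/ltn_ind: n y En => n IHn y En.
have [F EF] : exists F, gob_seq y = F by exists (gob_seq y).
elim: (wf_pointwise_lt (reedy_wf R) n.+1 F) y En EF => {}F _ IHF y En EF.
constructor=> x /gamma_lt_lex [lt_xy | [Exy lt_seq]].
  by apply: (IHn (gn x) _ x erefl); rewrite -En.
by apply: (IHF (gob_seq x) _ x _ erefl); rewrite -?EF -?En -?Exy.
Qed.

End WellFounded.

Theorem proposition5p3 (C : Cat) (Cm Cp : WideSub C) :
  Reedy C (wmem Cm) (wmem Cp) -> Reedy (Gamma Cm Cp) (GammaMinus Cm Cp) (GammaPlus Cm Cp).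
Proof.
move=> R; apply: MkReedy.
- exact: gamma_minus_wide.
- exact: gamma_plus_wide.
- exact: gamma_factorization R.
- move=> x y f z g h z' g' h'; exact: gamma_factorization_uniq.
- exact: gamma_dec_minus.
- exact: gamma_dec_plus R.
- exact: gamma_wf R.
Qed.
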